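(* Let $p$ be a prime, $k$ even, and let $G=HN$ be the affine permutation group of degree $p^k$ with $N=\mathbb F_{p^k}$ acting by translations and $H=\mathrm{GL}_1(p^k)\langle\phi\rangle\le\Gamma\mathrm L_1(p^k)$, where $\phi$ is the field automorphism of $\mathbb F_{p^k}$ of order $2$. Then $G$ is a non-Frobenius $2$-transitive group and $\kappa(G)=2$.
   Context: A derangement is an element fixing no point; $\kappa(G)$ is the number of conjugacy classes of derangements. $\mathrm{GL}_1(p^k)=\mathbb F_{p^k}^\times$ acting by multiplication. *)

From HB Require Import structures.
From mathcomp Require Import all_boot all_order all_algebra all_fingroup all_field.
Set Implicit Arguments. Unset Strict Implicit. Unset Printing Implicit Defensive.
Import GRing.Theory.
Local Open Scope ring_scope.

Section Defs.
Variable F : finFieldType.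

Definition transl_set : {set {perm F}} :=
  [set g : {perm F} | [exists b : F, [forall x : F, g x == x + b]]].

Definition gl1_set : {set {perm F}} :=
  [set g : {perm F} | [exists a : F, (a != 0) && [forall x : F, g x == a * x]]].

Definition phi_set (p k : nat) : {set {perm F}} :=
  [set g : {perm F} | [forall x : F, g x == x ^+ (p ^ k./2)]].

Definition H_grp (p k : nat) : {group {perm F}} :=
  <<gl1_set :|: phi_set p k>>%G.

Definition G_grp (p k : nat) : {group {perm F}} :=
  <<(H_grp p k : {set {perm F}}) :|: transl_set>>%G.
End Defs.

Section PermDefs.
Variable T : finType.

Definition two_transitive (G : {set {perm T}}) : Prop :=
  forall x y u v : T, x != y -> u != v ->
    exists2 g, g \in G & g x = u /\ g y = v.

Definition frobenius_perm (G : {set {perm T}}) : Prop :=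
  [/\ forall x y : T, exists2 g, g \in G & g x = y,
      exists2 g, g \in G & (g != 1)%g /\ exists x, g x = x
    & forall g, g \in G -> g != 1%g ->
        forall x y : T, g x = x -> g y = y -> x = y].

Definition derangement (g : {perm T}) : bool := [forall x : T, g x != x].

Definition kappa (G : {group {perm T}}) : nat :=
  #|[set C in classes G | [forall g in C, derangement g]]|.
End PermDefs.

From HB Require Import structures.
From mathcomp Require Import all_boot all_order all_algebra all_fingroup all_field.
From mathcomp Require Import ring.
Set Implicit Arguments. Unset Strict Implicit. Unset Printing Implicit Defensive.
Import GRing.Theory.
Local Open Scope ring_scope.

(* Write |F| = r^2 and phi x = x^r.  G is the group of all semi-affine maps
   x |-> a phi^s(x) + b with a != 0.  The affine maps alone are 2-transitive,
   and phi fixes 0 and 1, so G is not Frobenius.  An affine derangement is a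
   nonzero translation, conjugate to x |-> x + 1 by a scaling.  A semilinear
   map x |-> a x^r + b has a fixed point unless a a^r = 1; then a = c / c^r by
   Hilbert 90, and scaling by c conjugates it to x |-> x^r + e, which is a
   derangement iff e + e^r != 0.  By additive Hilbert 90, an affine map with
   slope in F_r conjugates any two such maps.  Finally, conjugates of
   translations are translations, so the two classes are distinct. *)

Section PermDerangement.
Variable T : finType.
Implicit Types (g h x : {perm T}) (G : {group {perm T}}).

Lemma derangementPn g : reflect (exists t, g t = t) (~~ derangement g).
Proof.
apply: (iffP forallPn) => [[t /negPn/eqP gt] | [t gt]]; exists t => //.
by rewrite gt eqxx.
Qed.

Lemma derangementJ g h : derangement (g ^ h) = derangement g.
Proof.
apply/forallP/forallP => der t; last by rewrite -(permKV h t) permJ (inj_eq perm_inj).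
by have := der (h t); rewrite permJ (inj_eq perm_inj).
Qed.

Lemma forall_class_derangement G x :
  [forall g in (x ^: G)%g, derangement g] = derangement x.
Proof.
apply/forall_inP/idP => [|der _ /imsetP[h _ ->]]; last by rewrite derangementJ.
by apply; exact: class_refl.
Qed.

Lemma intertwined_mem_class G g h x :
  h \in G -> (forall t, g (h t) = h (x t)) -> g \in (x ^: G)%g.
Proof.
move=> hG ghE; have -> : g = (x ^ h)%g.
  by apply/permP => t; rewrite -(permKV h t) permJ ghE.
exact: memJ_class.
Qed.

End PermDerangement.

Section FrobeniusInvolution.
Variables (F : finFieldType) (r : nat).
Hypotheses (r_pchar : [pchar F].-nat r) (card_F : (r * r)%N = #|F|).

Lemma r_gt1 : (1 < r)%N.
Proof.
have := finNzRing_gt1 F; rewrite -card_F; apply: contraTT; rewrite -!leqNgt.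
by move=> r_le1; exact: (leq_mul r_le1 r_le1).
Qed.

Definition frob (x : F) := x ^+ r.

Fact frob_is_nmod_morphism : nmod_morphism frob.
Proof.
by split=> [|x y]; rewrite /frob ?expr0n ?exprDn_pchar // gtn_eqF ?(ltnW r_gt1).
Qed.

Fact frob_is_monoid_morphism : monoid_morphism frob.
Proof. by split=> [|x y]; rewrite /frob ?expr1n ?exprMn. Qed.

HB.instance Definition _ := GRing.isNmodMorphism.Build F F frob frob_is_nmod_morphism.
HB.instance Definition _ :=
  GRing.isMonoidMorphism.Build F F frob frob_is_monoid_morphism.

Lemma frobK : involutive frob.
Proof. by move=> x; rewrite /frob -exprM card_F expf_card. Qed.

Definition reltrace (x : F) := x + frob x.

Lemma frob_reltrace x : frob (reltrace x) = reltrace x.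
Proof. by rewrite rmorphD /= frobK addrC. Qed.

(* The map t |-> t + a t^r is a polynomial of degree r < |F|, so it cannot
   vanish on all of F. *)
Lemma exists_twisted_trace_neq0 a : exists t, t + a * frob t != 0.
Proof.
have [-> | a0] := eqVneq a 0; first by exists 1; rewrite mul0r addr0 oner_neq0.
apply/existsP; apply: contraT; rewrite negb_exists => /forallP all_roots.
pose P : {poly F} := a *: 'X^r + 'X.
have size_P : size P = r.+1.
  by rewrite size_polyDl size_scale ?size_polyXn // size_polyX ltnS r_gt1.
have P_neq0 : P != 0 by rewrite -size_poly_gt0 size_P.
suff : (r * r <= r)%N by rewrite leqNgt -{1}[r]muln1 ltn_mul2l (ltnW r_gt1) r_gt1.
rewrite card_F cardE -ltnS -size_P; apply: max_poly_roots P_neq0 _ (enum_uniq F).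
apply/allP => x _; rewrite /root /P !hornerE addrC.
by have := all_roots x; rewrite negbK.
Qed.

Lemma exists_reltrace_neq0 : exists b, reltrace b != 0.
Proof. by have [b] := exists_twisted_trace_neq0 1; rewrite mul1r; exists b. Qed.

Lemma exists_frob_neq : exists t, frob t != t.
Proof.
have [t] := exists_twisted_trace_neq0 (-1); rewrite mulN1r subr_eq0 eq_sym.
by exists t.
Qed.

(* Additive Hilbert 90: w := s b^r / Tr(b) for any b with Tr(b) != 0. *)
Lemma reltrace_eq0_coboundary s : reltrace s = 0 -> exists w, w - frob w = s.
Proof.
move=> trs; have [b trb] := exists_reltrace_neq0.
have frob_s : frob s = - s by apply/eqP; rewrite -addr_eq0 addrC -/(reltrace s) trs.
exists (s * frob b / reltrace b).
rewrite !(rmorphM, fmorphV) /= frob_reltrace frobK frob_s.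
move: trb; rewrite /reltrace; move: (frob b) => fb trb.
by field.
Qed.

(* Multiplicative Hilbert 90: c := t + a t^r for a t making it nonzero. *)
Lemma norm_eq1_coboundary a : a * frob a = 1 -> exists2 c, c != 0 & a * frob c = c.
Proof.
move=> norm_a; have [t ct] := exists_twisted_trace_neq0 a.
exists (t + a * frob t) => //.
by rewrite rmorphD rmorphM /= frobK mulrDr mulrA norm_a mul1r addrC.
Qed.

(* Apply frob to x = a x^r + b and substitute back to solve for x. *)
Lemma norm_neq1_fixed a b : a * frob a != 1 -> exists x, a * frob x + b = x.
Proof.
move=> norm_a; have den_neq0 : 1 - a * frob a != 0 by rewrite subr_eq0 eq_sym.
exists ((a * frob b + b) / (1 - a * frob a)).
rewrite !(rmorphM, fmorphV, rmorphB, rmorphD, rmorph1) /= !frobK [frob a * a]mulrC.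
move: den_neq0; move: (frob a) (frob b) => fa fb den_neq0.
by field.
Qed.

Definition aut (s : bool) (x : F) := if s then frob x else x.

Lemma autD s x y : aut s (x + y) = aut s x + aut s y.
Proof. by case: s; rewrite /= ?rmorphD. Qed.

Lemma autM s x y : aut s (x * y) = aut s x * aut s y.
Proof. by case: s; rewrite /= ?rmorphM. Qed.

Lemma aut_eq0 s x : (aut s x == 0) = (x == 0).
Proof. by case: s; rewrite /= ?fmorph_eq0. Qed.

Lemma aut_comp s s' x : aut s' (aut s x) = aut (s' (+) s) x.
Proof. by case: s; case: s'; rewrite /= ?frobK. Qed.

Definition semiaffine_fun (a b : F) (s : bool) (x : F) := a * aut s x + b.

Lemma semiaffine_fun_inj a b s : a != 0 -> injective (semiaffine_fun a b s).
Proof.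
by move=> a0 x y /addIr /(mulfI a0); case: s => //= /(inv_inj frobK).
Qed.

Definition semiaffine a (a0 : a != 0) b s : {perm F} :=
  perm (@semiaffine_fun_inj a b s a0).

Lemma semiaffineE a (a0 : a != 0) b s x : semiaffine a0 b s x = a * aut s x + b.
Proof. by rewrite permE. Qed.

Definition transl b := semiaffine (oner_neq0 F) b false.
Definition phi_transl e := semiaffine (oner_neq0 F) e true.

Lemma semiaffine_fun_comp a b s a' b' s' x :
  semiaffine_fun a' b' s' (semiaffine_fun a b s x) =
  semiaffine_fun (a' * aut s' a) (a' * aut s' b + b') (s' (+) s) x.
Proof.
by rewrite /semiaffine_fun autD autM aut_comp mulrDr mulrA addrA.
Qed.

Definition semiaffine_set : {set {perm F}} :=
  [set g : {perm F} | [exists a, [exists b, [exists s,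
     (a != 0) && [forall x, g x == semiaffine_fun a b s x]]]]].

Lemma semiaffine_setP (g : {perm F}) :
  reflect (exists a b s, a != 0 /\ g =1 semiaffine_fun a b s)
          (g \in semiaffine_set).
Proof.
rewrite inE; apply: (iffP existsP) => [[a /existsP[b /existsP[s]]] | [a [b [s]]]].
  by case/andP=> a0 /forallP gE; exists a, b, s; split=> // x; apply/eqP.
case=> a0 gE; exists a; apply/existsP; exists b; apply/existsP; exists s.
by rewrite a0; apply/forallP => x; rewrite gE.
Qed.

Lemma group_semiaffine_set : group_set semiaffine_set.
Proof.
apply/group_setP; split.
  apply/semiaffine_setP; exists 1, 0, false; split=> [|x]; first exact: oner_neq0.
  by rewrite perm1 /semiaffine_fun mul1r addr0.
move=> g h /semiaffine_setP[a [b [s [a0 gE]]]] /semiaffine_setP[a' [b' [s' [a0' hE]]]].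
apply/semiaffine_setP; exists (a' * aut s' a), (a' * aut s' b + b'), (s' (+) s).
by split=> [|x]; rewrite ?mulf_neq0 ?aut_eq0 // permM gE hE semiaffine_fun_comp.
Qed.

Section AffineSemilinearGroup.
Variables p k : nat.
Hypothesis phi_exp : (p ^ k./2)%N = r.
Local Notation G := (G_grp F p k).

Lemma G_sub_semiaffine : G \subset semiaffine_set.
Proof.
rewrite (gen_subG _ (Group group_semiaffine_set)) subUset /=.
rewrite (gen_subG _ (Group group_semiaffine_set)) subUset -andbA.
apply/and3P; split; apply/subsetP => g; rewrite inE.
- case/existsP=> a /andP[a0 /forallP gE]; apply/semiaffine_setP.
  by exists a, 0, false; split=> // x; rewrite /semiaffine_fun addr0; apply/eqP.
- move/forallP=> gE; apply/semiaffine_setP; exists 1, 0, true.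
  split=> [|x]; first exact: oner_neq0.
  by rewrite /semiaffine_fun mul1r addr0 /= /frob -phi_exp; apply/eqP.
- case/existsP=> b /forallP gE; apply/semiaffine_setP; exists 1, b, false.
  by split=> [|x]; rewrite ?oner_neq0 // /semiaffine_fun mul1r; apply/eqP.
Qed.

Lemma semiaffine_in_G a (a0 : a != 0) b s : semiaffine a0 b s \in G.
Proof.
have -> : semiaffine a0 b s = (phi_transl 0 ^+ s * semiaffine a0 0 false * transl b)%g.
  apply/permP => x; rewrite !permM !semiaffineE /=.
  by case: s; rewrite /= ?expg1 ?expg0 ?perm1 ?semiaffineE /= !mul1r !addr0.
have H_sub_G : H_grp F p k \subset G by rewrite sub_gen // subsetUl.
rewrite !groupM ?groupX //; last first.
- apply: mem_gen; rewrite !inE; apply/orP; right.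
  by apply/existsP; exists b; apply/forallP => x; rewrite semiaffineE mul1r.
- apply: (subsetP H_sub_G); apply: mem_gen; rewrite !inE; apply/orP; left.
  apply/existsP; exists a; rewrite a0; apply/forallP => x.
  by rewrite semiaffineE addr0.
apply: (subsetP H_sub_G); apply: mem_gen; rewrite !inE; apply/orP; right.
by apply/forallP => x; rewrite semiaffineE /= mul1r addr0 /frob phi_exp.
Qed.

Lemma mem_G_semiaffine g :
  g \in G -> exists a b s (a0 : a != 0), g = semiaffine a0 b s.
Proof.
move/(subsetP G_sub_semiaffine)/semiaffine_setP => [a [b [s [a0 gE]]]].
by exists a, b, s, a0; apply/permP => x; rewrite gE semiaffineE.
Qed.

Lemma G_two_transitive : two_transitive G.
Proof.
move=> x y u v xy uv; pose a := (u - v) / (x - y).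
have a0 : a != 0 by rewrite mulf_neq0 ?invr_eq0 ?subr_eq0.
exists (semiaffine a0 (u - a * x) false); first exact: semiaffine_in_G.
rewrite !semiaffineE /=; split; first by rewrite addrC subrK.
by rewrite /a; field; rewrite subr_eq0.
Qed.

Lemma G_not_frobenius : ~ frobenius_perm G.
Proof.
case=> _ _ /(_ _ (semiaffine_in_G (oner_neq0 F) 0 true)) fixed_le1.
have phi_neq1 : phi_transl 0 != 1%g.
  have [t ft] := exists_frob_neq; apply: contraNneq ft => /permP/(_ t).
  by rewrite perm1 semiaffineE mul1r addr0 /= => ->.
have := fixed_le1 phi_neq1 0 1; rewrite !semiaffineE /= !mul1r !addr0 rmorph0 rmorph1.
by move=> /(_ erefl erefl)/eqP; rewrite eq_sym oner_eq0.
Qed.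

Lemma derangement_transl b : derangement (transl b) = (b != 0).
Proof.
apply/forallP/idP => [/(_ 0) | b0 x]; rewrite semiaffineE mul1r /=.
  by rewrite add0r.
by rewrite -subr_eq0 addrC addKr.
Qed.

Lemma derangement_phi_transl e : derangement (phi_transl e) = (reltrace e != 0).
Proof.
apply/idP/idP => [der | tre].
  apply: contraTneq der => /reltrace_eq0_coboundary[w we]; apply/derangementPn.
  by exists w; rewrite semiaffineE mul1r /= -we addrCA subrr addr0.
apply/forallP => x; rewrite semiaffineE mul1r /=; apply: contra tre => /eqP fixed.
have -> : e = x - frob x by rewrite -{1}fixed addrAC subrr add0r.
by rewrite /reltrace rmorphB /= frobK -opprB addNr.
Qed.

(* Inside %g, a bare 1 : F would denote the unit of the additive group, 0. *)
Lemma affine_derangement_mem_class a (a0 : a != 0) b :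
  derangement (semiaffine a0 b false) -> semiaffine a0 b false \in (transl 1%R ^: G)%g.
Proof.
move=> der.
have a1 : a = 1.
  apply/eqP; apply: contraTT der => a1; apply/derangementPn.
  exists (b / (1 - a)); rewrite semiaffineE /=.
  by field; rewrite subr_eq0 eq_sym.
have b0 : b != 0.
  apply: contraTneq der => b0; apply/derangementPn.
  by exists 0; rewrite semiaffineE b0 mulr0 addr0.
apply: (intertwined_mem_class (semiaffine_in_G b0 0 false)) => z.
by rewrite !semiaffineE /= a1 !mul1r addr0 mulrDr mulr1 addr0.
Qed.

(* Conjugating by z |-> u z + v with u^r = u; u is forced by the traces,
   and v exists by additive Hilbert 90. *)
Lemma phi_transl_mem_class e f :
  reltrace e != 0 -> reltrace f != 0 -> phi_transl e \in (phi_transl f ^: G)%g.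
Proof.
move=> tre trf; pose u := reltrace e / reltrace f.
have u0 : u != 0 by rewrite mulf_neq0 ?invr_eq0.
have frob_u : frob u = u by rewrite rmorphM fmorphV /= !frob_reltrace.
have [v v_cob] : exists v, v - frob v = e - u * f.
  apply: reltrace_eq0_coboundary.
  rewrite /reltrace rmorphB rmorphM /= frob_u addrACA -opprD -mulrDr.
  by rewrite -/(reltrace e) -/(reltrace f) divfK // subrr.
apply: (intertwined_mem_class (semiaffine_in_G u0 v false)) => z.
rewrite !semiaffineE /= !mul1r rmorphD rmorphM /= frob_u.
have -> : e = v - frob v + u * f by rewrite v_cob subrK.
by ring.
Qed.

Lemma semilinear_derangement_mem_class a (a0 : a != 0) b f :
  reltrace f != 0 -> derangement (semiaffine a0 b true) ->
  semiaffine a0 b true \in (phi_transl f ^: G)%g.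
Proof.
move=> trf der.
have norm_a : a * frob a = 1.
  apply/eqP; apply: contraTT der => /(norm_neq1_fixed b)[x fixed].
  by apply/derangementPn; exists x; rewrite semiaffineE.
have [c c0 ac] := norm_eq1_coboundary norm_a.
have g_class : semiaffine a0 b true \in (phi_transl (b / c)%R ^: G)%g.
  apply: (intertwined_mem_class (semiaffine_in_G c0 0 false)) => z.
  rewrite !semiaffineE /= !addr0 mul1r rmorphM /= mulrA ac mulrDr.
  by rewrite mulrCA divff // mulr1.
have tr_bc : reltrace (b / c) != 0.
  rewrite -derangement_phi_transl.
  by case/imsetP: (g_class) der => h _ ->; rewrite derangementJ.
exact: class_trans g_class (phi_transl_mem_class tr_bc trf).
Qed.

Lemma mem_class_transl g b :
  g \in (transl b ^: G)%g -> exists c, forall x, g x = x + c.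
Proof.
case/imsetP => h /mem_G_semiaffine[a [c [s [a0 ->]]]] ->.
exists (a * aut s b) => x.
rewrite -(permKV (semiaffine a0 c s) x) permJ.
by rewrite !semiaffineE mul1r autD mulrDr addrAC.
Qed.

Lemma phi_transl_notin_class_transl e b : phi_transl e \notin (transl b ^: G)%g.
Proof.
apply/negP => /mem_class_transl[c phiE].
have e_c : e = c by have := phiE 0; rewrite semiaffineE mul1r /= rmorph0 !add0r.
have [t] := exists_frob_neq; apply/negP; rewrite negbK.
by have := phiE t; rewrite semiaffineE mul1r /= -e_c => /addIr ->.
Qed.

Lemma derangement_classes f : reltrace f != 0 ->
  [set C in classes G | [forall g in C, derangement g]] =
  [set (transl 1%R ^: G)%g; (phi_transl f ^: G)%g].
Proof.
move=> trf; apply/setP => C; rewrite !inE.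
apply/andP/orP => [[/imsetP[g gG ->]] | ].
  rewrite forall_class_derangement => der.
  have [a [b [s [a0 gE]]]] := mem_G_semiaffine gG; move: der; rewrite {g gG}gE.
  case: s => der; apply/orP; rewrite -!(sameP class_eqP eqP).
    by rewrite (semilinear_derangement_mem_class trf der) orbT.
  by rewrite (affine_derangement_mem_class der).
case=> /eqP ->; rewrite mem_classes ?semiaffine_in_G // forall_class_derangement.
  by rewrite derangement_transl oner_neq0.
by rewrite derangement_phi_transl.
Qed.

Lemma kappa_G : kappa G = 2%N.
Proof.
have [f trf] := exists_reltrace_neq0.
rewrite /kappa (derangement_classes trf) cards2.
suff -> : (transl 1%R ^: G)%g != (phi_transl f ^: G)%g by [].
apply: contraNneq (phi_transl_notin_class_transl f 1) => ->.
exact: class_refl.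
Qed.

End AffineSemilinearGroup.
End FrobeniusInvolution.

Theorem proposition4p10 (F : finFieldType) (p k : nat)
  (hp : prime p) (hk : ~~ odd k) (hF : #|F| = (p ^ k)%N) :
  two_transitive (G_grp F p k : {set {perm F}}) /\
  ~ frobenius_perm (G_grp F p k : {set {perm F}}) /\
  kappa (G_grp F p k) = 2%N.
Proof.
have card_F : (p ^ k./2 * p ^ k./2)%N = #|F|.
  by rewrite hF -expnD addnn -[in RHS](odd_double_half k) (negbTE hk).
have r_pchar : [pchar F].-nat (p ^ k./2)%N.
  by rewrite pnatX pnatE // (card_finPcharP hF hp).
split; first exact: (G_two_transitive card_F (erefl _)).
split; first exact: (G_not_frobenius r_pchar card_F (erefl _)).
exact: (kappa_G r_pchar card_F (erefl _)).
Qed.
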